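(* Let $K\ge1$ be an integer and $m>0$. For $x>0$ define $$g_{\mathbf 0}(x)=\int_{\{(t_1,\dots,t_K)\in[0,\infty)^K:\ \prod_{k=1}^K(1+t_k)\le x\}}\prod_{k=1}^K t_k^{m-1}\,dt_1\cdots dt_K .$$ Then $\mathcal R\mapsto g_{\mathbf 0}(2^{\mathcal R})$ is a monotonically increasing function of $\mathcal R>0$, it is convex in $\mathcal R$ whenever $m\ge1$, and consequently $C(\mathcal R)=\big(g_{\mathbf 0}(2^{\mathcal R})\big)^{-1/(mK)}$ is a monotonically decreasing function of $\mathcal R>0$. *)

From HB Require Import structures.
From mathcomp Require Import all_boot all_order all_algebra.
From mathcomp Require Import all_classical all_reals all_analysis.
Set Implicit Arguments. Unset Strict Implicit. Unset Printing Implicit Defensive.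
Import Order.TTheory GRing.Theory Num.Theory.
Local Open Scope classical_set_scope.
Local Open Scope ring_scope.

Fixpoint iter_int (R : realType) (n : nat) (F : seq R -> \bar R) : \bar R :=
  match n with
  | 0 => F [::]
  | n'.+1 => (\int[@lebesgue_measure R]_(t in `[0%R, +oo[)
               iter_int n' (fun s => F (t :: s)))%E
  end.

Definition g0_integrand (R : realType) (m x : R) (s : seq R) : \bar R :=
  if (\prod_(t <- s) (1 + t) <= x) then (\prod_(t <- s) (t `^ (m - 1)))%:E
  else 0%E.

Definition g0 (R : realType) (K : nat) (m x : R) : \bar R :=
  iter_int K (g0_integrand m x).

Definition Cfun (R : realType) (K : nat) (m r : R) : R :=
  (fine (g0 K m (2 `^ r))) `^ (- (1 / (m * K%:R))).

From HB Require Import structures.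
From mathcomp Require Import all_boot all_order all_algebra.
From mathcomp Require Import all_classical all_reals all_analysis.
From mathcomp Require Import measurable_realfun lra.
Import Order.TTheory GRing.Theory Num.Theory numFieldNormedType.Exports.
Local Open Scope classical_set_scope.
Local Open Scope ring_scope.

(* Integrating out the first variable gives the recursion
     g_(K+1)(x) = \int_0^oo t^(m-1) g_K(x/(1+t)) dt,
   with g_0 the indicator of [1, +oo[.  By induction on K, g_K is finite,
   nondecreasing, zero below 1 and positive above 1.  It is strictly increasing
   on ]1, +oo[ because for x < y there is an interval of t on which the
   integrand for x vanishes while the one for y is bounded below.
   Convexity of R |-> g_K(2^R) is convexity in ln x ("GA-convexity"); since
   x |-> x/(1+t) commutes with weighted geometric means, the recursion preserves
   it.  The induction starts at g_1(x) = max(x-1, 0)^m / m, which is GA-convex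
   for m >= 1 by AM-GM and convexity of u |-> u^m.  Finally C is g_K(2^R)
   composed with the decreasing map u |-> u^(-1/(mK)). *)

Section real_facts.
Context {R : realType}.

Lemma continuous_powR_gt0 (p x : R) : 0 < x -> {for x, continuous (@powR R ^~ p)}.
Proof.
move=> x0; apply: differentiable_continuous; apply/derivable1_diffP.
by apply: derivable_powR; rewrite in_itv /= andbT.
Qed.

Lemma ltr_powR (a : R) : 1 < a -> {homo powR a : x y / x < y}.
Proof.
move=> a1 x y xy; rewrite /powR gt_eqF ?(lt_trans ltr01) //.
by rewrite ltr_expR ltr_pM2r ?ln_gt0.
Qed.

Lemma powR_gt1 (a r : R) : 1 < a -> 0 < r -> 1 < a `^ r.
Proof. by move=> a1 r0; rewrite -[X in X < _](powRr0 a); exact: ltr_powR. Qed.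

Lemma ltr_powRN (p x y : R) : 0 < p -> 0 < x -> x < y -> y `^ (- p) < x `^ (- p).
Proof.
move=> p0 x0 xy; have y0 := lt_trans x0 xy.
rewrite !powRN ltf_pV2 ?posrE ?powR_gt0 //.
by apply: gt0_ltr_powR; rewrite ?nnegrE ?ltW.
Qed.

Lemma powRD_mean (a r1 r2 l : R) : a != 0 ->
  a `^ (l * r1 + (1 - l) * r2) = (a `^ r1) `^ l * (a `^ r2) `^ (1 - l).
Proof.
move=> a0; rewrite powRD ?a0 ?implybT //.
by rewrite -!powRrM [r1 * l]mulrC [r2 * (1 - l)]mulrC.
Qed.

Lemma min_powR_le (p a b t : R) : 0 < a -> a <= t -> t <= b ->
  Num.min (a `^ p) (b `^ p) <= t `^ p.
Proof.
move=> a0 at_ tb; have t0 : 0 < t by exact: lt_le_trans at_.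
have b0 : 0 < b by exact: lt_le_trans tb.
rewrite ge_min; apply/orP; have [p0|p0] := leP 0 p.
  by left; apply: ge0_ler_powR => //; rewrite nnegrE ltW.
have e z : z `^ p = (z `^ (- p))^-1 by rewrite powRN invrK.
right; rewrite (e t) (e b) lef_pV2 ?posrE ?powR_gt0 //.
by apply: ge0_ler_powR => //; rewrite ?oppr_ge0 ?nnegrE ltW.
Qed.

Lemma powR_mean_le (x1 x2 l : R) : 0 < x1 -> 0 < x2 -> 0 <= l <= 1 ->
  x1 `^ l * x2 `^ (1 - l) <= l * x1 + (1 - l) * x2.
Proof.
move=> x10 x20 /andP[l0 l1]; have := concave_ln (Itv01 l0 l1) x10 x20.
rewrite !convRE /= -ler_ln ?posrE ?mulr_gt0 ?powR_gt0 //; last first.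
  by nra.
by rewrite lnM ?posrE ?powR_gt0 // !ln_powR.
Qed.

Lemma divr_powR_mean (x1 x2 l c : R) : 0 <= x1 -> 0 <= x2 -> 0 < c ->
  (x1 `^ l * x2 `^ (1 - l)) / c = (x1 / c) `^ l * (x2 / c) `^ (1 - l).
Proof.
move=> x10 x20 c0; have ci : 0 <= c^-1 by rewrite invr_ge0 ltW.
rewrite !powRM // mulrACA -powRD; last by apply/implyP => _; rewrite invr_eq0 gt_eqF.
by rewrite addrCA subrr addr0 powRr1.
Qed.

Lemma measurable_div1D (x : R) :
  measurable_fun (`[0%R, +oo[ : set R) (fun t => x / (1 + t)).
Proof.
apply: (eq_measurable_fun (fun t : R => x * (1 + t) `^ (-1))).
  by move=> t /[!inE] /= /[!in_itv] /= /[!andbT] t0; rewrite powR_inv1 // addr_ge0.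
apply: measurable_funM; first exact: measurable_cst.
apply: (measurableT_comp (measurable_powR (-1))).
by apply: measurable_funD; [exact: measurable_cst | exact: measurable_id].
Qed.

End real_facts.

Definition GA_convex {R : realType} (f : R -> R) :=
  forall x1 x2 l : R, 0 < x1 -> 0 < x2 -> 0 <= l <= 1 ->
  f (x1 `^ l * x2 `^ (1 - l)) <= l * f x1 + (1 - l) * f x2.

Lemma GA_convex_powR_pos_part (R : realType) (m : R) : 1 <= m ->
  GA_convex (fun x : R => Num.max (x - 1) 0 `^ m / m).
Proof.
move=> m1 x1 x2 l x10 x20 /andP[l0 l1]; have l'0 : 0 <= 1 - l by rewrite subr_ge0.
rewrite !mulrA -mulrDl ler_pM2r ?invr_gt0 ?(lt_le_trans ltr01) //.
set u1 := Num.max (x1 - 1) 0; set u2 := Num.max (x2 - 1) 0.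
have u0 (y : R) : 0 <= Num.max (y - 1) 0 by rewrite le_max lexx orbT.
have [e1 e2] : x1 - 1 <= u1 /\ x2 - 1 <= u2 by rewrite /u1 /u2 !le_max !lexx.
apply: (le_trans (y := (l * u1 + (1 - l) * u2) `^ m)).
  apply: ge0_ler_powR; rewrite ?nnegrE ?u0 ?addr_ge0 ?mulr_ge0 ?u0 //; first lra.
  rewrite ge_max addr_ge0 ?mulr_ge0 ?u0 // andbT.
  apply: le_trans (_ : l * x1 + (1 - l) * x2 - 1 <= _).
    by rewrite lerD2r powR_mean_le ?l0.
  by have := ler_wpM2l l0 e1; have := ler_wpM2l l'0 e2; nra.
have /(_ u1 u2) := convex_powR m1 (Itv01 l0 l1).
by rewrite !inE /= !in_itv /= !andbT !u0 !convRE /=; apply.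
Qed.

Section itv_integral.
Context {R : realType}.
Local Notation mu := (@lebesgue_measure R).

Lemma cvg_integral_itv_left (f : R -> \bar R) (c a : R) (e : R ^nat) :
  measurable_fun setT f -> (forall t, (0 <= f t)%E) ->
  (forall k, c < e k) -> nonincreasing_seq e -> e k @[k --> \oo] --> c ->
  (\int[mu]_(t in `[e k, a]) f t)%E @[k --> \oo] --> (\int[mu]_(t in `]c, a]) f t)%E.
Proof.
move=> mf f0 ce e_ni e_cvg; pose g k := f \_ `[e k, a].
have g_nd t : nondecreasing_seq (g^~ t).
  move=> k l kl; rewrite /g /patch; case: ifPn => [|_]; last by case: ifP.
  rewrite inE /= in_itv /= => /andP[ekt ta]; rewrite ifT // inE /= in_itv /= ta.
  by rewrite andbT (le_trans _ ekt) // e_ni.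
have lim_g t : limn (g^~ t) = (f \_ `]c, a]) t.
  apply: cvg_lim => //; apply: cvg_near_cst; rewrite /g /patch.
  case: ifPn => [|ct].
    rewrite inE /= in_itv /= => /andP[ct ta]; near=> k.
    rewrite ifT // inE /= in_itv /= ta andbT ltW //.
    by near: k; exact: (cvgr_lt _ e_cvg _ ct).
  apply: nearW => k; rewrite ifF //; apply/negbTE; apply: contra ct.
  by rewrite !inE /= !in_itv /= => /andP[ekt ->]; rewrite (lt_le_trans (ce k)).
rewrite integral_mkcond.
have -> : (\int[mu]_t (f \_ `]c, a]) t = \int[mu]_t limn (g^~ t))%E.
  by apply: eq_integral => t _; rewrite lim_g.
under eq_fun do rewrite integral_mkcond.
apply: cvg_monotone_convergence => //.
  by move=> k; rewrite -measurable_restrictT //; exact: measurable_funTS.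
by move=> k t _; exact: erestrict_ge0.
Unshelve. all: by end_near. Qed.

Lemma integral_cst_patch_itv (D : set R) (d a b : R) : measurable D ->
  `[a, b] `<=` D -> a <= b ->
  (\int[mu]_(t in D) ((fun=> d%:E) \_ `[a, b]) t = (d * (b - a))%:E)%E.
Proof.
move=> mD abD ab; rewrite -integral_mkcondr setIidr // integral_cst //=.
rewrite lebesgue_measure_itv /= lte_fin.
move: ab; rewrite le_eqVlt => /predU1P[<-|ab]; first by rewrite ltxx subrr mulr0 mule0.
by rewrite ab -EFinD -EFinM.
Qed.

Section powR_integral.
Variable m : R.
Hypothesis m_gt0 : 0 < m.

Lemma integral_powR_itv (e a : R) : 0 < e -> e < a ->
  (\int[mu]_(t in `[e, a]) (t `^ (m - 1))%:E = ((a `^ m - e `^ m) / m)%:E)%E.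
Proof.
move=> e0 ea; have a0 : 0 < a by exact: lt_trans ea.
have pos t : e <= t -> 0 < t by exact: lt_le_trans.
rewrite mulrBl EFinB.
apply: (continuous_FTC2 (F := fun t => t `^ m / m)) => //.
- apply/continuous_within_itvP => //; split.
  + by move=> t; rewrite in_itv /= => /andP[/ltW/pos t0 _]; exact: continuous_powR_gt0.
  + exact/cvg_at_right_filter/continuous_powR_gt0.
  + exact/cvg_at_left_filter/continuous_powR_gt0.
- split.
  + move=> t; rewrite in_itv /= => /andP[/ltW/pos t0 _].
    by apply: derivableM => //; apply: derivable_powR; rewrite in_itv /= andbT.
  + by apply: cvgMr_tmp; apply: cvg_at_right_filter; exact: continuous_powR_gt0.
  + by apply: cvgMr_tmp; apply: cvg_at_left_filter; exact: continuous_powR_gt0.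
- move=> t; rewrite in_itv /= => /andP[/ltW/pos t0 _].
  rewrite derive1Mr; last by apply: derivable_powR; rewrite in_itv /= andbT.
  by rewrite powR_derive1 ?in_itv /= ?andbT // mulrAC mulfV ?gt_eqF // mul1r.
Qed.

Lemma integral_powR_itv0 (a : R) : 0 <= a ->
  (\int[mu]_(t in `[0%R, a]) (t `^ (m - 1))%:E = (a `^ m / m)%:E)%E.
Proof.
rewrite le_eqVlt => /orP[/eqP <-|a0].
  rewrite powR0 ?gt_eqF // mul0r (@integral_Sset1 _ _ _ 0) // => t /=.
  by rewrite in_itv /= => /andP[t0 t0']; apply/eqP; rewrite eq_le t0 t0'.
pose e k := a / 2 * harmonic k.
have e0 k : 0 < e k by rewrite mulr_gt0 ?divr_gt0 ?harmonic_gt0.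
have ea k : e k < a.
  have h1 : harmonic k <= 1 :> R by rewrite /= invf_le1 ?ler1n.
  by rewrite /e (le_lt_trans (ler_piMr _ h1)) ?divr_ge0 ?ltW //; lra.
have e_ni : nonincreasing_seq e.
  by move=> k l kl; rewrite ler_pM2l ?divr_gt0 // lef_pV2 ?posrE // ler_nat.
have e_cvg : e k @[k --> \oo] --> 0.
  by rewrite -(mulr0 (a / 2)); apply: cvgMl_tmp; exact: cvg_harmonic.
have mf : measurable_fun setT (fun t : R => (t `^ (m - 1))%:E).
  by apply/measurable_EFinP; exact: measurable_powR.
have f0 (t : R) : (0 <= (t `^ (m - 1))%:E)%E by rewrite lee_fin powR_ge0.
have := cvg_integral_itv_left _ _ a _ mf f0 e0 e_ni e_cvg.
rewrite integral_itv_obnd_cbnd; last exact: measurable_funTS.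
move/cvg_lim <- => //; apply: cvg_lim => //.
under eq_fun do rewrite integral_powR_itv //.
apply: cvg_EFin; first exact: nearW.
have -> : a `^ m / m = (a `^ m - 0) / m by rewrite subr0.
apply: cvgMr_tmp; apply: cvgB; first exact: cvg_cst.
by apply: (cvg_at_rightP _ _ _).1 (powR_cvg0 m_gt0) _ _; split.
Qed.

End powR_integral.
End itv_integral.

Lemma iter_intS (R : realType) (n : nat) (F : seq R -> \bar R) :
  iter_int n.+1 F =
  (\int[lebesgue_measure]_(t in `[0%R, +oo[) iter_int n (fun s => F (t :: s)))%E.
Proof. by []. Qed.

Section g0_recursion.
Context {R : realType} (m : R).
Hypothesis m_gt0 : 0 < m.

Local Notation mu := (@lebesgue_measure R).
Local Notation G n x := (fine (g0 n m x)).

Let D : set R := `[0, +oo[.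

Let D_ge0 t : D t -> 0 <= t.
Proof. by rewrite /D /= in_itv /= andbT. Qed.

Let measurableD : measurable D. Proof. exact: measurable_itv. Qed.

Lemma g0_integrand_cons (x t : R) (s : seq R) : 0 <= t ->
  g0_integrand m x (t :: s) = ((t `^ (m - 1))%:E * g0_integrand m (x / (1 + t)) s)%E.
Proof.
move=> t0; rewrite /g0_integrand !big_cons ler_pdivlMr ?ltr_pwDl // mulrC.
by case: ifP => _; rewrite ?EFinM ?mule0.
Qed.

Lemma g0_0 (x : R) : g0 0 m x = if 1 <= x then 1%E else 0%E.
Proof. by rewrite /g0 /= /g0_integrand !big_nil. Qed.

Section g0_step.
Variable n : nat.
Hypothesis g0_scale : forall x c, 0 <= c ->
  iter_int n (fun s => c%:E * g0_integrand m x s)%E = (c%:E * g0 n m x)%E.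
Hypothesis g0_fin : forall x, g0 n m x \is a fin_num.
Hypothesis G_nd : {homo (fun x => G n x) : x y / x <= y}.
Hypothesis g0_lt1 : forall x, x < 1 -> g0 n m x = 0%E.

Let h x t := t `^ (m - 1) * G n (x / (1 + t)).

Let G_lt1 x : x < 1 -> G n x = 0.
Proof. by move/g0_lt1 ->. Qed.

Let G_ge0 x : 0 <= G n x.
Proof.
have [/G_lt1 -> //|x1] := ltP x 1.
by rewrite -(G_lt1 0 ltr01) G_nd // (le_trans ler01).
Qed.

Let div1D_lt1 (x t : R) : 0 <= t -> (x / (1 + t) < 1) = (x < 1 + t).
Proof. by move=> t0; rewrite ltr_pdivrMr ?mul1r //; lra. Qed.

Let h_ge0 (x t : R) : D t -> (0 <= (h x t)%:E)%E.
Proof. by move=> /D_ge0 t0; rewrite lee_fin mulr_ge0 ?powR_ge0. Qed.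

Let measurable_h (x : R) : measurable_fun D (fun t => (h x t)%:E).
Proof.
apply/measurable_EFinP; apply: measurable_funM.
  exact: measurable_funTS (measurable_powR _).
apply: (measurableT_comp (f := fun y => G n y)); last exact: measurable_div1D.
exact: nondecreasing_measurable.
Qed.

Lemma iter_int_g0_integrand_cons (x c t : R) : 0 <= c -> 0 <= t ->
  iter_int n (fun s => c%:E * g0_integrand m x (t :: s))%E =
  (c * t `^ (m - 1) * G n (x / (1 + t)))%:E.
Proof.
move=> c0 t0.
have -> : (fun s => c%:E * g0_integrand m x (t :: s))%E =
    (fun s => (c * t `^ (m - 1))%:E * g0_integrand m (x / (1 + t)) s)%E.
  by apply/funext => s; rewrite g0_integrand_cons // EFinM muleA.
by rewrite g0_scale ?mulr_ge0 ?powR_ge0 // -[g0 _ _ _]fineK ?g0_fin // -EFinM.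
Qed.

Lemma g0S (x : R) : g0 n.+1 m x = (\int[mu]_(t in D) (h x t)%:E)%E.
Proof.
rewrite /g0 iter_intS; apply: eq_integral => t /[!inE] /D_ge0 t0.
under eq_fun do rewrite -[g0_integrand _ _ _]mul1e.
by rewrite iter_int_g0_integrand_cons // mul1r.
Qed.

Lemma g0S_scale (x c : R) : 0 <= c ->
  iter_int n.+1 (fun s => c%:E * g0_integrand m x s)%E = (c%:E * g0 n.+1 m x)%E.
Proof.
move=> c0; rewrite iter_intS g0S -ge0_integralZl_EFin //; [|exact: h_ge0|exact: measurable_h].
apply: eq_integral => t /[!inE] /D_ge0 t0.
by rewrite iter_int_g0_integrand_cons // -mulrA EFinM.
Qed.

Lemma g0S_lt1 (x : R) : x < 1 -> g0 n.+1 m x = 0%E.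
Proof.
move=> x1; rewrite g0S integral0_eq // => t /D_ge0 t0.
by rewrite /h G_lt1 ?mulr0 // div1D_lt1 //; lra.
Qed.

Lemma g0S_itv (x : R) : 1 <= x ->
  g0 n.+1 m x = (\int[mu]_(t in `[0%R, (x - 1)%R]) (h x t)%:E)%E.
Proof.
move=> x1; rewrite g0S -(setIidr (_ : `[0, x - 1] `<=` D)); last first.
  by apply: subset_itvl; rewrite bnd_simp.
rewrite integral_mkcondr; apply: eq_integral => t /[!inE] /D_ge0 t0.
rewrite /patch /=; case: ifPn => // tP.
have t_gt : x - 1 < t.
  by rewrite ltNge; apply: contra tP => tx; rewrite inE /= in_itv /= t0.
by rewrite /h G_lt1 ?mulr0 // div1D_lt1 //; lra.
Qed.

Lemma g0S_le (x : R) : 1 <= x ->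
  (g0 n.+1 m x <= (G n x * ((x - 1) `^ m / m))%:E)%E.
Proof.
move=> x1; rewrite g0S_itv // EFinM -integral_powR_itv0 ?subr_ge0 //.
rewrite -ge0_integralZl_EFin //; first last.
- by apply/measurable_EFinP; exact: measurable_funTS (measurable_powR _).
- by move=> t _; rewrite lee_fin powR_ge0.
apply: ge0_le_integral => //.
- by move=> t _; rewrite lee_fin mulr_ge0 ?powR_ge0.
- apply: measurable_funS (measurable_h x) => //.
  by apply: subset_itvl; rewrite bnd_simp.
- apply/measurable_EFinP; apply: measurable_funM; first exact: measurable_cst.
  exact: measurable_funTS (measurable_powR _).
move=> t; rewrite /= in_itv /= => /andP[t0 _]; rewrite lee_fin /h mulrC.
rewrite ler_wpM2r ?powR_ge0 // G_nd // ler_pdivrMr; last by lra.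
by rewrite ler_peMr; lra.
Qed.

Lemma g0S_fin (x : R) : g0 n.+1 m x \is a fin_num.
Proof.
have [/g0S_lt1 -> //|x1] := ltP x 1.
rewrite ge0_fin_numE; last by rewrite g0S; apply: integral_ge0; exact: h_ge0.
exact: le_lt_trans (g0S_le _ x1) (ltry _).
Qed.

Lemma g0S_nd : {homo (fun x => G n.+1 x) : x y / x <= y}.
Proof.
move=> x y xy; apply: fine_le; rewrite ?g0S_fin // !g0S.
apply: ge0_le_integral => //; [exact: h_ge0 | exact: measurable_h | exact: measurable_h |].
move=> t /D_ge0 t0.
rewrite lee_fin ler_wpM2l ?powR_ge0 // G_nd // ler_wpM2r // invr_ge0; lra.
Qed.

Lemma g0S_lt (x y : R) : (forall z, 1 < z -> 0 < G n z) ->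
  1 < x -> x < y -> G n.+1 x < G n.+1 y.
Proof.
move=> G_gt0 x1 xy.
(* For t in [a, b]: x < 1 + t, so h x t = 0, while y / (1 + t) > 1. *)
pose a := x - 1 + (y - x) / 3; pose b := y - 1 - (y - x) / 3.
have a0 : 0 < a by rewrite /a; lra.
have ab : a < b by rewrite /a /b; lra.
have ybG : 0 < G n (y / (1 + b)).
  by apply: G_gt0; rewrite ltr_pdivlMr ?mul1r /b; lra.
pose d := Num.min (a `^ (m - 1)) (b `^ (m - 1)) * G n (y / (1 + b)).
have d0 : 0 < d by rewrite mulr_gt0 // lt_min !powR_gt0 //; lra.
pose bump := (fun=> d%:E) \_ `[a, b].
have ab_D : `[a, b] `<=` D by apply: subset_itv; rewrite bnd_simp // ltW.
have int_bump : (\int[mu]_(t in D) bump t = (d * (b - a))%:E)%E.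
  by rewrite integral_cst_patch_itv // ltW.
have bump_ge0 t : (0 <= bump t)%E.
  by rewrite /bump /patch; case: ifP; rewrite // lee_fin ltW.
have h_bump t : D t -> ((h x t)%:E + bump t <= (h y t)%:E)%E.
  move=> /D_ge0 t0; rewrite /bump /patch; case: ifPn => [|_]; last first.
    by rewrite adde0 lee_fin ler_wpM2l ?powR_ge0 // G_nd // ler_wpM2r ?invr_ge0; lra.
  rewrite inE /= in_itv /= => /andP[at_ tb].
  have t_gt : x - 1 < t by move: at_; rewrite /a; lra.
  rewrite /h G_lt1 ?mulr0 ?add0e; last by rewrite div1D_lt1 //; lra.
  rewrite lee_fin; apply: ler_pM.
  - by rewrite le_min !powR_ge0.
  - exact: ltW.
  - exact: min_powR_le.
  - by apply: G_nd; rewrite ler_wpM2l ?lef_pV2 ?posrE; lra.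
have : (g0 n.+1 m x + (d * (b - a))%:E <= g0 n.+1 m y)%E.
  have mbump : measurable_fun D bump.
    by apply/measurable_restrict => //; exact: measurable_cst.
  rewrite !g0S -int_bump -ge0_integralD //; [|exact: h_ge0|exact: measurable_h].
  apply: ge0_le_integral => //; last exact: measurable_h.
  - by move=> t Dt; rewrite adde_ge0 ?h_ge0.
  - by apply: emeasurable_funD => //; exact: measurable_h.
rewrite -[g0 _ _ x]fineK ?g0S_fin // -[g0 _ _ y]fineK ?g0S_fin // -EFinD lee_fin.
by apply: lt_le_trans; rewrite ltrDl mulr_gt0 // subr_gt0.
Qed.

Lemma g0S_GA_convex : GA_convex (fun x => G n x) -> GA_convex (fun x => G n.+1 x).
Proof.
move=> Gc x1 x2 l x10 x20 /andP[l0 l1].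
have l'0 : 0 <= 1 - l by rewrite subr_ge0.
set z := x1 `^ l * x2 `^ (1 - l).
have Zh c x : 0 <= c -> measurable_fun D (fun t => c%:E * (h x t)%:E)%E.
  by move=> c0; apply: measurable_funeM; exact: measurable_h.
have : (g0 n.+1 m z <= l%:E * g0 n.+1 m x1 + (1 - l)%:E * g0 n.+1 m x2)%E.
  rewrite !g0S -!ge0_integralZl_EFin //; [|exact: h_ge0|exact: measurable_h
                                          |exact: h_ge0|exact: measurable_h].
  rewrite -ge0_integralD //; first last.
  - exact: Zh.
  - by move=> t Dt; rewrite mule_ge0 ?h_ge0.
  - exact: Zh.
  - by move=> t Dt; rewrite mule_ge0 ?h_ge0.
  apply: ge0_le_integral => //; [exact: h_ge0|exact: measurable_h| |].
  - by apply: emeasurable_funD; exact: Zh.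
  move=> t /D_ge0 t0; rewrite -!EFinM -EFinD lee_fin /h /z.
  rewrite divr_powR_mean; [|exact: ltW|exact: ltW|lra].
  rewrite mulrCA [(1 - l) * _]mulrCA -mulrDr ler_wpM2l ?powR_ge0 //.
  by apply: Gc; rewrite ?divr_gt0 ?l0 //; lra.
rewrite -[g0 _ _ z]fineK ?g0S_fin // -[g0 _ _ x1]fineK ?g0S_fin //.
by rewrite -[g0 _ _ x2]fineK ?g0S_fin // -!EFinM -EFinD lee_fin.
Qed.

Lemma g0S_gt0 : (forall z, 1 < z -> 0 < G n z) -> forall x, 1 < x -> 0 < G n.+1 x.
Proof.
move=> G_gt0 x x1; apply: le_lt_trans (g0S_lt ((1 + x) / 2) x G_gt0 _ _); last 2 first.
- by lra.
- by lra.
by rewrite fine_ge0 // g0S; apply: integral_ge0; exact: h_ge0.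
Qed.

End g0_step.

(* The scaling clause lets constants be pulled out of the inner iterated
   integrals; it must be carried along because pulling them out of the outer
   integral needs measurability, which comes from monotonicity. *)
Definition g0_regular n :=
  [/\ forall x c, 0 <= c ->
        iter_int n (fun s => c%:E * g0_integrand m x s)%E = (c%:E * g0 n m x)%E,
      forall x, g0 n m x \is a fin_num,
      {homo (fun x => G n x) : x y / x <= y},
      forall x, x < 1 -> g0 n m x = 0%E &
      forall x, 1 < x -> 0 < G n x].

Lemma g0_regular0 : g0_regular 0.
Proof.
split=> [x c _ //|x|x y xy|x|x x1]; rewrite ?g0_0 //.
- by case: ifP.
- by case: ifPn => [/(le_trans)/(_ xy) -> //|_]; case: ifP.
- by rewrite leNgt => ->.
- by rewrite ltW.
Qed.

Lemma g0_regularS n : g0_regular n -> g0_regular n.+1.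
Proof.
case=> sc fin nd lt1 gt0; split.
- exact: g0S_scale.
- exact: g0S_fin.
- exact: g0S_nd.
- exact: g0S_lt1.
- exact: g0S_gt0.
Qed.

Lemma g0_regularP n : g0_regular n.
Proof. by elim: n => [|n /g0_regularS]; [exact: g0_regular0|]. Qed.

End g0_recursion.

Section g0_theory.
Context {R : realType} (m : R).
Hypothesis m_gt0 : 0 < m.

Local Notation G n x := (fine (g0 n m x)).

Lemma g0_fin n (x : R) : g0 n m x \is a fin_num.
Proof. by case: (g0_regularP _ m_gt0 n). Qed.

Lemma g0_gt0 n (x : R) : 1 < x -> 0 < G n x.
Proof. by case: (g0_regularP _ m_gt0 n) => _ _ _ _; apply. Qed.

Lemma g0_lt n (x y : R) : 1 < x -> x < y -> G n.+1 x < G n.+1 y.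
Proof.
have [sc fin nd lt1 gt0] := g0_regularP _ m_gt0 n.
exact: g0S_lt.
Qed.

Lemma g01E (x : R) : G 1 x = Num.max (x - 1) 0 `^ m / m.
Proof.
have [sc fin nd lt1 _] := g0_regular0 m.
have [x1|x1] := ltP x 1.
  by rewrite g0S_lt1 // max_r ?powR0 ?mul0r ?gt_eqF //; lra.
rewrite g0S_itv // max_l ?subr_ge0 //.
rewrite -[_ / m]/(fine ((x - 1) `^ m / m)%:E) -integral_powR_itv0 ?subr_ge0 //.
congr fine; apply: eq_integral => t; rewrite inE /= in_itv /= => /andP[t0 tx].
by rewrite g0_0 ler_pdivlMr ?mul1r ?ifT ?mulr1 //; lra.
Qed.

Lemma g0_GA_convex n : 1 <= m -> GA_convex (fun x => G n.+1 x).
Proof.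
move=> m1; elim: n => [|n IH].
  by under eq_fun do rewrite g01E; exact: GA_convex_powR_pos_part.
have [sc fin nd lt1 _] := g0_regularP _ m_gt0 n.+1.
exact: g0S_GA_convex.
Qed.

End g0_theory.

Theorem lemma4 (R : realType) (K : nat) (m : R) (hK : (1 <= K)%N) (hm : 0 < m) :
  (forall r1 r2 : R, 0 < r1 -> r1 < r2 ->
     (g0 K m (2 `^ r1) < g0 K m (2 `^ r2))%E)
  /\ (1 <= m -> forall (r1 r2 l : R), 0 < r1 -> 0 < r2 -> 0 <= l <= 1 ->
     (g0 K m (2 `^ (l * r1 + (1 - l) * r2))
        <= l%:E * g0 K m (2 `^ r1) + (1 - l)%:E * g0 K m (2 `^ r2))%E)
  /\ (forall r1 r2 : R, 0 < r1 -> r1 < r2 -> Cfun K m r2 < Cfun K m r1).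
Proof.
case: K hK => // k _.
have two_gt1 : 1 < 2 :> R by rewrite ltr1n.
have fin (x : R) := g0_fin _ hm k.+1 x.
have g0_pow2_lt (r1 r2 : R) : 0 < r1 -> r1 < r2 ->
    fine (g0 k.+1 m (2 `^ r1)) < fine (g0 k.+1 m (2 `^ r2)).
  by move=> r10 r12; apply: g0_lt => //; [exact: powR_gt1 | exact: ltr_powR].
split; [|split].
- move=> r1 r2 r10 r12.
  by rewrite -(fineK (fin (2 `^ r1))) -(fineK (fin (2 `^ r2))) lte_fin g0_pow2_lt.
- move=> m1 r1 r2 l r10 r20 l01; rewrite powRD_mean ?pnatr_eq0 //.
  rewrite -(fineK (fin (2 `^ r1))) -(fineK (fin (2 `^ r2))) -(fineK (fin (_ * _))).
  by rewrite -!EFinM -EFinD lee_fin; apply: g0_GA_convex; rewrite ?powR_gt0.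
- move=> r1 r2 r10 r12; apply: ltr_powRN (g0_pow2_lt _ _ r10 r12).
    by rewrite divr_gt0 // mulr_gt0 // ltr0n.
  by apply: g0_gt0 => //; exact: powR_gt1.
Qed.
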